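(* Let $C>0$, $L>0$, $R>0$, $\nu\in\mathbb{R}$, $h>0$ and let $\hat \varphi:\mathbb{R}\to\mathbb{R}$ be any function. Suppose real sequences $v_{C,k},i_{C,k},i_{L,k},v_{L,k},v_{R,k},i_{R,k},v_{M,k},i_{M,k},q_{M,k}$, $k=0,1,2,\dots$, satisfy for all $k$: $$i_{C,k}=C\frac{v_{C,k+1}-v_{C,k}}{h},\quad v_{L,k}=L\frac{i_{L,k+1}-i_{L,k}}{h},\quad v_{R,k}=Ri_{R,k},$$ $$v_{M,k}=\frac{\hat \varphi(q_{M,k+1})-\hat \varphi(q_{M,k})}{h},\quad q_{M,k+1}=q_{M,k}+hi_{M,k},$$ $$v_{C,k}=v_{L,k}+v_{M,k},\quad v_{C,k}=v_{R,k},\quad i_{L,k}+i_{R,k}+i_{C,k}-\nu i_{L,k}=0,\quad i_{L,k}=i_{M,k}.$$ Then: 1) $(i_{L,k},v_{C,k},q_{M,k})$ is an orbit of the three-dimensional map $$\begin{aligned} i_{L,k+1}&=i_{L,k}-\tfrac{1}{L}\big(\hat \varphi(q_{M,k}+hi_{L,k})-\hat \varphi(q_{M,k})\big)+\tfrac{h}{L}v_{C,k},\\ v_{C,k+1}&=\big(1-\tfrac{h}{RC}\big)v_{C,k}+\tfrac{h}{C}(\nu-1)i_{L,k},\\ q_{M,k+1}&=q_{M,k}+hi_{L,k}.\end{aligned}$$ 2) For any step size $h>0$, the function $\Theta_{DMLC}(v_C,i_L,q_M)=RCv_C+Li_L+\hat\varphi(q_M)+R(1-\nu)q_M$ is a first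 integral of this map, i.e. it takes the same value at $k+1$ as at $k$ for all $k\ge0$ along every orbit. 3) Consequently $\mathbb{R}^3$ is foliated into the invariant sets $\mathcal{M}_{DMLC}(\Phi_0)=\{(v_C,i_L,q_M)\in\mathbb{R}^3:\Theta_{DMLC}(v_C,i_L,q_M)=\Phi_0\}$, $\Phi_0\in\mathbb{R}$, and along any orbit of the map lying in $\mathcal{M}_{DMLC}(\Phi_0)$, setting $\varphi^0_{C,k}=h\sum_{j=0}^{k-1}v_{C,j}$ and $y_k=\varphi^0_{C,k}+R(\nu-1)q_{M,0}-CRv_{C,0}$, the pair $(q_{M,k},y_k)$ obeys the two-dimensional map $$q_{M,k+1}=q_{M,k}+\tfrac{h}{L}y_k-\tfrac{h}{L}\hat\varphi(q_{M,k})+\tfrac{h}{L}\Phi_0,\qquad y_{k+1}=\big(1-\tfrac{h}{RC}\big)y_k+\tfrac{h}{C}(\nu-1)q_{M,k}.$$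
   Context: These equations model the dual of a discrete-time memristor Murali-Lakshmanan-Chua circuit: an inductor $L$ in series with a charge-controlled memristor $\varphi_M=\hat\varphi(q_M)$, connected in parallel with a resistor $R$, a capacitor $C$ and a current-controlled current source of value $\nu i_L$, discretized with step size $h$. The quantity $\varphi^0_{C,k}$ is the (discrete) incremental flux of the capacitor. *)

From Stdlib Require Import Reals Lra.
Open Scope R_scope.

(* State of the 3D map, ordered as in the paper: (i_L, v_C, q_M). *)
Definition state := (R * R * R)%type.

Definition DMLC_map (C L Rr nu h : R) (phi : R -> R) (s : state) : state :=
  let '(iL, vC, qM) := s in
  ( iL - (1 / L) * (phi (qM + h * iL) - phi qM) + (h / L) * vC,
    (1 - h / (Rr * C)) * vC + (h / C) * (nu - 1) * iL,
    qM + h * iL ).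

Definition Theta_DMLC (C L Rr nu : R) (phi : R -> R) (vC iL qM : R) : R :=
  Rr * C * vC + L * iL + phi qM + Rr * (1 - nu) * qM.

Definition Theta_st (C L Rr nu : R) (phi : R -> R) (s : state) : R :=
  let '(iL, vC, qM) := s in Theta_DMLC C L Rr nu phi vC iL qM.

Definition M_DMLC (C L Rr nu : R) (phi : R -> R) (Phi0 : R) (s : state) : Prop :=
  Theta_st C L Rr nu phi s = Phi0.

Definition is_orbit (f : state -> state) (x : nat -> state) : Prop :=
  forall k, x (S k) = f (x k).

Fixpoint psum (u : nat -> R) (k : nat) : R :=
  match k with
  | O => 0
  | S k' => psum u k' + u k'
  end.

Definition st_iL (s : state) : R := fst (fst s).
Definition st_vC (s : state) : R := snd (fst s).
Definition st_qM (s : state) : R := snd s.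

(* The map is an Euler step for the inductor and the capacitor, while the
   memristor contributes the exact difference phi(q_{k+1}) - phi(q_k).  Hence in
   RC v_C + L i_L + phi(q_M) + R(1-nu) q_M the memristor terms telescope and the
   remaining increments cancel because q_{k+1} - q_k = h i_L: Theta is conserved
   for every step size.  On a level set Theta = Phi0 one solves for L i_L, and the
   flux coordinate y = R(nu-1) q_M - RC v_C satisfies y_{k+1} - y_k = h v_{C,k},
   so it coincides with the partial sums of the statement; in (q_M, y) the map
   closes into the two-dimensional one. *)
From Stdlib Require Import Reals Lra.
Open Scope R_scope.

Section DualMLC.

Variables (C L Rr nu h : R) (phi : R -> R).
Hypotheses (HC : C <> 0) (HL : L <> 0) (HR : Rr <> 0).

Local Notation f := (DMLC_map C L Rr nu h phi).
Local Notation Theta := (Theta_st C L Rr nu phi).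

Lemma circuit_step (iL iL' vC vC' qM qM' iC vL vR iR vM iM : R) :
  h <> 0 ->
  iC = C * (vC' - vC) / h ->
  vL = L * (iL' - iL) / h ->
  vR = Rr * iR ->
  vM = (phi qM' - phi qM) / h ->
  qM' = qM + h * iM ->
  vC = vL + vM ->
  vC = vR ->
  iL + iR + iC - nu * iL = 0 ->
  iL = iM ->
  (iL', vC', qM') = f (iL, vC, qM).
Proof.
  intros Hh HiC HvL HvR HvM Hq KVL_M KVL_R KCL ->.
  assert (HiL' : iL' = iM + h / L * (vC - vM)) by (rewrite KVL_M, HvL; field; auto).
  assert (HiR : iR = vC / Rr) by (rewrite KVL_R, HvR; field; auto).
  assert (HvC' : vC' = vC + h / C * ((nu - 1) * iM - iR)).
  { replace ((nu - 1) * iM - iR) with iC by lra; rewrite HiC; field; auto. }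
  rewrite HiL', HvC', HiR, HvM; unfold DMLC_map; rewrite <- Hq.
  do 2 f_equal; field; auto.
Qed.

Lemma Theta_DMLC_map (s : state) : Theta (f s) = Theta s.
Proof.
  destruct s as [[iL vC] qM]; unfold DMLC_map, Theta_st, Theta_DMLC.
  field; auto.
Qed.

Lemma M_DMLC_map (Phi0 : R) (s : state) :
  M_DMLC C L Rr nu phi Phi0 s -> M_DMLC C L Rr nu phi Phi0 (f s).
Proof. unfold M_DMLC; rewrite Theta_DMLC_map; auto. Qed.

Definition flux_coord (s : state) : R :=
  Rr * (nu - 1) * st_qM s - Rr * C * st_vC s.

Lemma flux_coord_map (s : state) :
  flux_coord (f s) = (1 - h / (Rr * C)) * flux_coord s + h / C * (nu - 1) * st_qM s.
Proof.
  destruct s as [[iL vC] qM]; unfold flux_coord, DMLC_map, st_qM, st_vC; simpl.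
  field; auto.
Qed.

Lemma flux_coord_map_incr (s : state) : flux_coord (f s) = flux_coord s + h * st_vC s.
Proof.
  rewrite flux_coord_map; destruct s as [[iL vC] qM].
  unfold flux_coord, st_qM, st_vC; simpl; field; auto.
Qed.

Lemma flux_coord_orbit (x : nat -> state) : is_orbit f x ->
  forall k, flux_coord (x k) = h * psum (fun i => st_vC (x i)) k + flux_coord (x O).
Proof.
  intros Hx k; induction k as [|k IHk]; simpl.
  - ring.
  - rewrite Hx, flux_coord_map_incr, IHk; ring.
Qed.

Lemma qM_map_on_level (Phi0 : R) (s : state) : Theta s = Phi0 ->
  st_qM (f s) = st_qM s + h / L * flux_coord s - h / L * phi (st_qM s) + h / L * Phi0.
Proof.
  destruct s as [[iL vC] qM]; intros <-.
  unfold flux_coord, DMLC_map, Theta_st, Theta_DMLC, st_qM, st_vC; simpl.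
  field; auto.
Qed.

End DualMLC.

Theorem proposition4 (C L Rr nu h : R) (phi : R -> R)
  (HC : 0 < C) (HL : 0 < L) (HR : 0 < Rr) (Hh : 0 < h) :
  (* 1) circuit solutions are orbits of the 3D map *)
  (forall vC iC iL vL vR iR vM iM qM : nat -> R,
     (forall k,
        iC k = C * (vC (S k) - vC k) / h /\
        vL k = L * (iL (S k) - iL k) / h /\
        vR k = Rr * iR k /\
        vM k = (phi (qM (S k)) - phi (qM k)) / h /\
        qM (S k) = qM k + h * iM k /\
        vC k = vL k + vM k /\
        vC k = vR k /\
        iL k + iR k + iC k - nu * iL k = 0 /\
        iL k = iM k) ->
     forall k, (iL (S k), vC (S k), qM (S k))
               = DMLC_map C L Rr nu h phi (iL k, vC k, qM k))
  /\
  (* 2) Theta is a first integral of the map *)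
  (forall x : nat -> state, is_orbit (DMLC_map C L Rr nu h phi) x ->
     forall k, Theta_st C L Rr nu phi (x (S k)) = Theta_st C L Rr nu phi (x k))
  /\
  (* 3) foliation into invariant level sets, and reduction to a 2D map *)
  ((forall s : state, exists! Phi0 : R, M_DMLC C L Rr nu phi Phi0 s)
   /\
   (forall (Phi0 : R) (s : state), M_DMLC C L Rr nu phi Phi0 s ->
      M_DMLC C L Rr nu phi Phi0 (DMLC_map C L Rr nu h phi s))
   /\
   (forall (Phi0 : R) (x : nat -> state),
      is_orbit (DMLC_map C L Rr nu h phi) x ->
      (forall k, M_DMLC C L Rr nu phi Phi0 (x k)) ->
      forall k : nat,
        let q := fun j => st_qM (x j) in
        let y := fun j => h * psum (fun i => st_vC (x i)) j
                          + Rr * (nu - 1) * q O - C * Rr * st_vC (x O) in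
        q (S k) = q k + (h / L) * y k - (h / L) * phi (q k) + (h / L) * Phi0 /\
        y (S k) = (1 - h / (Rr * C)) * y k + (h / C) * (nu - 1) * q k)).
Proof.
  assert (HC0 : C <> 0) by lra.
  assert (HL0 : L <> 0) by lra.
  assert (HR0 : Rr <> 0) by lra.
  split; [|split; [|split; [|split]]].
  - intros vC iC iL vL vR iR vM iM qM Hcirc k.
    destruct (Hcirc k) as (HiC & HvL & HvR & HvM & Hq & KVL_M & KVL_R & KCL & HiM).
    eapply circuit_step; eauto; lra.
  - intros x Hx k; rewrite Hx; apply Theta_DMLC_map; auto.
  - intros s; exists (Theta_st C L Rr nu phi s); split; [reflexivity|auto].
  - apply M_DMLC_map; auto.
  - intros Phi0 x Hx Hlevel k q y.
    assert (Hy : forall j, y j = flux_coord C Rr nu (x j)).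
    { intro j; unfold y, q; rewrite (flux_coord_orbit C L Rr nu h phi HC0 HR0 x Hx j).
      unfold flux_coord; ring. }
    unfold q; rewrite !Hy, Hx; split.
    + apply qM_map_on_level, Hlevel; auto.
    + apply flux_coord_map; auto.
Qed.
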